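(* Let $H_1$ and $H_2$ be atomic hypergraphs with $\mathcal A(H_1)$ and $\mathcal A(H_2)$ of ranks $r_1$ and $r_2$, and let $k$ be an integer with $-1\le k\le \min(r_1,r_2)-1$. If the set of faces of rank $k$ of $\mathcal A(H_1)$ equals the set of faces of rank $k$ of $\mathcal A(H_2)$, then $\mathcal A(H_1)=\mathcal A(H_2)$.
   Context: A hypergraph is a finite set $H$ of nonempty subsets of some finite set; its carrier is $\bigcup H$. For a family $F$ and set $Y$, $F_Y=\{X\in F\mid X\subseteq Y\}$. A hypergraph partition of $H$ is a partition $\{H_1,\dots,H_n\}$ ($n\ge0$) of the set $H$ with $\{\bigcup H_1,\dots,\bigcup H_n\}$ a partition of $\bigcup H$; $H$ is connected if it has exactly one hypergraph partition; the finest hypergraph partition is the unique one whose blocks are connected; the sets $\bigcup H_i$ for its blocks are the connected components of the carrier, and their number $n$ is the connectedness number. $H$ is atomic if $\{x\}\in H$ for all $x\in\bigcup H$. Constructions of an atomic $H$, by induction on $|\bigcup H|$: (0) $\emptyset$ is the only construction of $\emptyset$; (1) if $|\bigcup H|\ge1$, $H$ connected, $x\in\bigcup H$, $K$ a construction of $H_{\bigcup H\setminus\{x\}}$, then $K\cup\{\bigcup H\}$ is a construction of $H$; (2) if $H$ is not connected with finest hypergraph partition $\{H_1,\dots,H_n\}$, $n\ge2$, and $K_i$ is a construction of $H_i$, then $K_1\cup\dots\cup K_n$ is a construction of $H$. A construct of $H$ is a subset of a construction of $H$ containing every connected component of $\bigcup H$. $H$ is saturated if $X_1,X_2\in H$,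 $X_1\cap X_2\ne\emptyset$ imply $X_1\cup X_2\in H$. $Y\subseteq\bigcup H$ is dispensable in $H$ if $H_Y\setminus\{Y\}$ is a connected hypergraph with carrier $Y$; hypergraphs on the same carrier are cognate if related by the equivalence relation generated by $H\sim H\cup\{Y\}$ for $Y$ dispensable in $H$; the saturated closure $\bar H$ is the unique saturated hypergraph cognate to $H$. The poset $\mathcal A(H)$ has as elements all constructs of $H$ together with $\bar H^*=\bar H\cup\{*\}$ ($*$ a fixed new element not in any carrier), ordered by $C_1\le C_2$ iff $C_2\subseteq C_1$. Its rank is $r=|\bigcup H|-n$; for $0\le k\le r$ the faces of rank $k$ are the constructs of cardinality $|\bigcup H|-k$, and $\bar H^*$ is the unique face of rank $-1$. *)

From HB Require Import structures.
From Stdlib Require Import Relations.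
From mathcomp Require Import all_boot all_order all_algebra.
Set Implicit Arguments. Unset Strict Implicit. Unset Printing Implicit Defensive.
Import Order.TTheory GRing.Theory Num.Theory.

Section Hyp.
Variable T : finType.
Implicit Types (H G B : {set {set T}}) (X Y : {set T}).

Definition hypergraph H : bool := set0 \notin H.

Definition carrier H : {set T} := \bigcup_(X in H) X.

Definition restrict H Y : {set {set T}} := [set X in H | X \subset Y].

Definition hpartition H (P : {set {set {set T}}}) : bool :=
  partition P H &&
  [forall B1 in P, forall B2 in P,
     (B1 != B2) ==> [disjoint carrier B1 & carrier B2]].

Definition connected H : bool :=
  #|[set P : {set {set {set T}}} | hpartition H P]| == 1.

Definition finest H (P : {set {set {set T}}}) : bool :=
  hpartition H P && [forall B in P, connected B].

Definition conn_number H : nat :=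
  if [pick P | finest H P] is Some P then #|P| else 0.

Definition atomic H : Prop := forall x, x \in carrier H -> [set x] \in H.

Inductive construction : {set {set T}} -> {set {set T}} -> Prop :=
| construction0 : construction set0 set0
| construction1 H x K :
    connected H -> x \in carrier H ->
    construction (restrict H (carrier H :\ x)) K ->
    construction H (carrier H |: K)
| construction2 H (P : {set {set {set T}}}) (f : {set {set T}} -> {set {set T}}) :
    ~~ connected H -> finest H P -> 1 < #|P| ->
    (forall B, B \in P -> construction B (f B)) ->
    construction H (\bigcup_(B in P) f B).

(* construct: subset of a construction containing every connected component
   (= carrier of a block of the finest hypergraph partition) *)
Definition construct H (C : {set {set T}}) : Prop :=
  (exists K, construction H K /\ C \subset K) /\
  (forall P, finest H P -> forall B, B \in P -> carrier B \in C).

Definition saturated H : bool :=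
  [forall X1 in H, forall X2 in H,
     ~~ [disjoint X1 & X2] ==> (X1 :|: X2 \in H)].

Definition dispensable H Y : bool :=
  [&& Y \subset carrier H, connected (restrict H Y :\ Y)
    & carrier (restrict H Y :\ Y) == Y].

(* one step H ~ H u {Y}, Y dispensable (and nonempty, so that the result is
   again a hypergraph) *)
Definition cog_step H G : Prop :=
  exists Y, [/\ dispensable H Y, Y != set0 & G = Y |: H].

Definition cognate H G : Prop := clos_refl_sym_trans _ cog_step H G.

Definition sat_closure H G : Prop := saturated G /\ cognate H G.

(* Elements of A(H) are encoded as sets over option {set T}: a construct C is
   encoded as Some @: C, and barH* = barH u {*} as None |: Some @: barH
   (None plays the role of the new element * ). *)
Definition enc (C : {set {set T}}) : {set option {set T}} := Some @: C.

Definition inA H (F : {set option {set T}}) : Prop :=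
  (exists C, construct H C /\ F = enc C) \/
  (exists G, sat_closure H G /\ F = None |: enc G).

Definition rankA H : int := (#|carrier H|%:Z - (conn_number H)%:Z)%R.

Definition face_of_rank H (k : int) (F : {set option {set T}}) : Prop :=
  (k = (-1)%R /\ exists G, sat_closure H G /\ F = None |: enc G) \/
  [/\ (0 <= k)%R, (k <= rankA H)%R &
      exists C, [/\ construct H C, (#|C|%:Z = #|carrier H|%:Z - k)%R
                  & F = enc C]].

End Hyp.

From Stdlib Require Import Relations.
From mathcomp Require Import all_boot all_order all_algebra.
Set Implicit Arguments. Unset Strict Implicit. Unset Printing Implicit Defensive.
Import Order.TTheory GRing.Theory Num.Theory.

(* A(H) depends on H only through its connected sets, the nonempty Y such
   that H_Y is connected with carrier Y: they form the saturated closure of H,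
   and H has the same constructions and constructs as any hypergraph with the
   same connected sets.  The face of rank -1 is the saturated closure itself.
   For k >= 0, a connected set Y of H1 lies in a construct of H1 with
   |carrier H1| - k elements, since besides Y a construct need only contain
   the n1 < |carrier H1| - k connected components; this construct is a face
   of A(H2), so Y is a connected set of H2.  By symmetry H1 and H2 have the
   same connected sets. *)

Lemma disjoint_sub0 (aT : finType) (U V : {set aT}) :
  [disjoint U & V] -> U \subset V -> U = set0.
Proof.
move=> dUV sUV; apply/eqP; rewrite -subset0; apply/subsetP => x xU.
by have := subsetP sUV x xU; rewrite (disjointFr dUV xU).
Qed.

Lemma card_bigcup_disjoint (I U : finType) (J : {set I}) (F : I -> {set U}) :
  {in J &, forall i j, i != j -> [disjoint F i & F j]} ->
  {in J, forall i, F i != set0} ->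
  #|\bigcup_(i in J) F i| = \sum_(i in J) #|F i|.
Proof.
move=> dF nF; rewrite -cover_imset.
have [/eqP <- injF] : trivIset (F @: J) /\ {in J &, injective F}.
  apply: trivIimset; first by move=> i j iJ jJ ne; apply: dF; rewrite // eq_sym.
  by apply/imsetP => -[i iJ e]; move: (nF i iJ); rewrite -e eqxx.
exact: big_imset.
Qed.

Lemma exists_card_between (U : finType) (A K : {set U}) m :
  A \subset K -> #|A| <= m <= #|K| ->
  exists C : {set U}, [/\ A \subset C, C \subset K & #|C| = m].
Proof.
elim: m => [|m IH] sAK /andP[leAm lemK].
  by exists A; split=> //; apply/eqP; rewrite -leqn0.
move: leAm; rewrite leq_eqVlt => /orP[/eqP eAm|ltAm]; first by exists A.
have [|C [sAC sCK cC]] := IH sAK; first by rewrite -ltnS ltAm (ltnW lemK).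
have /subsetPn[z zK zC] : ~~ (K \subset C).
  by apply: contraTN lemK => /subset_leq_card; rewrite cC -leqNgt.
exists (z |: C); split; first exact: subset_trans sAC (subsetUr _ _).
  by rewrite subUset sub1set zK.
by rewrite cardsU1 zC cC.
Qed.

Section ConnectedSets.
Variable T : finType.
Implicit Types (H G A B D K R S U V W : {set {set T}}) (X Y Z C : {set T}).

Lemma carrierP H x : reflect (exists2 X, X \in H & x \in X) (x \in carrier H).
Proof. exact: bigcupP. Qed.

Lemma sub_carrier H X : X \in H -> X \subset carrier H.
Proof. exact: bigcup_sup. Qed.

Lemma carrierS A B : A \subset B -> carrier A \subset carrier B.
Proof.
by move=> sAB; apply/bigcupsP => X XA; apply/sub_carrier/(subsetP sAB).
Qed.

Lemma carrier_set0 : carrier (set0 : {set {set T}}) = set0.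
Proof. by rewrite /carrier big_set0. Qed.

Lemma carrier_set1 X : carrier [set X] = X.
Proof. by rewrite /carrier big_set1. Qed.

Lemma carrierU1 X A : carrier (X |: A) = X :|: carrier A.
Proof. by rewrite /carrier bigcup_setU big_set1. Qed.

Lemma in_restrict H Y X : (X \in restrict H Y) = (X \in H) && (X \subset Y).
Proof. by rewrite inE. Qed.

Lemma restrict_sub H Y : restrict H Y \subset H.
Proof. by apply/subsetP => X /[!in_restrict] /andP[]. Qed.

Lemma carrier_restrict_sub H Y : carrier (restrict H Y) \subset Y.
Proof. by apply/bigcupsP => X /[!in_restrict] /andP[]. Qed.

Lemma restrict_restrict H Y Z :
  Z \subset Y -> restrict (restrict H Y) Z = restrict H Z.
Proof.
move=> sZY; apply/setP => X; rewrite !in_restrict -andbA.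
by case sXZ: (X \subset Z); rewrite ?andbF // (subset_trans sXZ sZY).
Qed.

Lemma restrict_carrier H : restrict H (carrier H) = H.
Proof.
by apply/setP => X; rewrite in_restrict andb_idr //; apply: sub_carrier.
Qed.

Lemma hypergraphS H A : hypergraph H -> A \subset H -> hypergraph A.
Proof. by move=> hH sAH; apply: contra hH; apply: (subsetP sAH). Qed.

Lemma hypergraph_neq0 H X : hypergraph H -> X \in H -> X != set0.
Proof. by move=> hH XH; apply: contraNneq hH => <-. Qed.

Lemma carrier_eq0 A : hypergraph A -> (carrier A == set0) = (A == set0).
Proof.
move=> hA; apply/eqP/eqP => [cA|->]; last exact: carrier_set0.
apply/setP => X; rewrite inE; apply/negbTE/negP => XA.
by move: (hypergraph_neq0 hA XA); rewrite -subset0 -cA sub_carrier.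
Qed.

Lemma not_disjoint_common (U V W : {set T}) :
  W != set0 -> W \subset U -> W \subset V -> ~~ [disjoint U & V].
Proof.
move=> /set0Pn[x xW] sU sV; apply/negP => d.
by have := disjointFr d (subsetP sU x xW); rewrite (subsetP sV x xW).
Qed.

Definition splitfree H := forall A, A \subset H ->
  [disjoint carrier A & carrier (H :\: A)] -> A = set0 \/ A = H.

Lemma hpartition_disjoint H P B1 B2 : hpartition H P -> B1 \in P -> B2 \in P ->
  B1 != B2 -> [disjoint carrier B1 & carrier B2].
Proof.
case/andP => _ /forallP/(_ B1)/implyP dP B1P B2P.
by move/forallP/(_ B2)/implyP/(_ B2P)/implyP: (dP B1P).
Qed.

Lemma hpartition_split H P B : hpartition H P -> B \in P ->
  [disjoint carrier B & carrier (H :\: B)].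
Proof.
move=> hP BP; have /and3P[/eqP covP _ _] : partition P H by case/andP: hP.
rewrite -setI_eq0; apply/eqP/setP => x; rewrite !inE.
apply/negbTE/andP => -[/carrierP[X XB xX] /carrierP[X' /setDP[X'H X'nB] xX']].
move: X'H; rewrite -covP => /bigcupP[B' B'P X'B'].
have neB : B != B' by apply: contraNneq X'nB => ->.
have xB : x \in carrier B by apply/carrierP; exists X.
have xB' : x \in carrier B' by apply/carrierP; exists X'.
by rewrite (disjointFr (hpartition_disjoint hP BP B'P neB) xB) in xB'.
Qed.

Lemma hpartition_set1 H : H != set0 -> hpartition H [set H].
Proof.
move=> H0; apply/andP; split.
  by rewrite /partition cover1 eqxx trivIset1 inE eq_sym H0.
by apply/forall_inP => B1 /set1P-> ; apply/forall_inP => B2 /set1P->; rewrite eqxx.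
Qed.

Lemma hpartition_set2 H A : A \subset H -> A != set0 -> A != H ->
  [disjoint carrier A & carrier (H :\: A)] -> hpartition H [set A; H :\: A].
Proof.
move=> sAH A0 AH dA.
have dD : [disjoint H :\: A & A].
  by have := subsetD (H :\: A) H A; rewrite subxx subsetDl.
have D0 : H :\: A != set0.
  by apply: contraNneq AH => /eqP; rewrite setD_eq0 eqEsubset sAH => ->.
have neq : A != H :\: A.
  apply: contraNneq A0 => eA; apply/eqP; rewrite eA; apply: (disjoint_sub0 dD).
  by rewrite -eA.
apply/andP; split.
  apply/and3P; split.
  - rewrite /cover bigcup_setU !big_set1.
    by rewrite -[X in _ == X](setID H A) (setIidPr sAH).
  - apply/trivIsetP => B1 B2 /set2P[]-> /set2P[]->; rewrite ?eqxx // => _.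
      by rewrite disjoint_sym.
  - by rewrite !inE negb_or ![set0 == _]eq_sym A0.
apply/forall_inP => B1 /set2P[]-> ; apply/forall_inP => B2 /set2P[]->;
  by rewrite ?eqxx ?dA ?implybT // disjoint_sym dA implybT.
Qed.

Lemma connectedP H : reflect (splitfree H) (connected H).
Proof.
apply: (iffP idP).
  move=> /cards1P[P0 eP] A sAH dA.
  have [->|A0] := eqVneq A set0; first by left.
  have [->|AH] := eqVneq A H; first by right.
  have H0 : H != set0 by apply: contraNneq A0 => H0; rewrite -subset0 -H0.
  have : [set H] \in [set P | hpartition H P] by rewrite inE hpartition_set1.
  have : [set A; H :\: A] \in [set P | hpartition H P].
    by rewrite inE hpartition_set2.
  rewrite eP !inE => /eqP eA /eqP eH.
  have : A \in [set A; H :\: A] by rewrite !inE eqxx.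
  by rewrite eA -eH => /set1P AH'; rewrite AH' eqxx in AH.
move=> sf; apply/cards1P.
have [->|H0] := eqVneq H set0.
  exists set0; apply/setP => P; rewrite !inE /hpartition partition_set0.
  by case: (eqVneq P set0) => [->|] //=; apply/forall_inP => B; rewrite inE.
exists [set H]; apply/setP => P; rewrite !inE.
apply/idP/eqP => [hP|->]; last exact: hpartition_set1.
have pP : partition P H by case/andP: hP.
have allH B : B \in P -> B = H.
  move=> BP; case: (sf B (partitionS pP BP) (hpartition_split hP BP)) => // B0.
  by move: (partition_neq0 pP BP); rewrite B0 eqxx.
have : P != set0.
  by apply: contraNneq H0 => P0; rewrite -(cover_partition pP) P0 /cover big_set0.
case/set0Pn => B BP; apply/eqP; rewrite eqEsubset; apply/andP; split.
  by apply/subsetP => B' B'P; rewrite inE (allH _ B'P).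
by apply/subsetP => B' /set1P->; rewrite -(allH _ BP).
Qed.

Lemma connected_subU S U V : connected S -> S \subset U :|: V ->
  [disjoint carrier U & carrier V] -> S \subset U \/ S \subset V.
Proof.
move=> /connectedP sf sS dUV.
have dA : [disjoint carrier (S :&: U) & carrier (S :\: (S :&: U))].
  apply: disjointW dUV; first exact/carrierS/subsetIr.
  apply: carrierS; apply/subsetP => X /setDP[XS]; rewrite inE XS /= => XU.
  by move: (subsetP sS X XS); rewrite inE (negbTE XU).
case: (sf _ (subsetIl S U) dA) => [e|e]; last by left; rewrite -e subsetIr.
right; apply/subsetP => X XS; move: (subsetP sS X XS); rewrite inE.
case/orP => // XU; have : X \in S :&: U by rewrite inE XS.
by rewrite e inE.
Qed.

Lemma connected_top A X :
  hypergraph A -> X \in A -> carrier A \subset X -> connected A.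
Proof.
move=> hA XA sAX; apply/connectedP => B sBA dB.
have hB := hypergraphS hA sBA; have hD := hypergraphS hA (subsetDl A B).
case XB: (X \in B).
  right; have : carrier (A :\: B) = set0.
    apply: (disjoint_sub0 (V := carrier B)); first by rewrite disjoint_sym.
    apply: subset_trans (sub_carrier XB).
    exact: subset_trans (carrierS (subsetDl A B)) sAX.
  move/eqP; rewrite carrier_eq0 // setD_eq0 => sAB.
  by apply/eqP; rewrite eqEsubset sBA.
left; apply/eqP; rewrite -carrier_eq0 //; apply/eqP.
apply: (disjoint_sub0 dB); apply: subset_trans (@sub_carrier (A :\: B) X _).
  exact: subset_trans (carrierS sBA) sAX.
by rewrite inE XB.
Qed.

Lemma connected_union K S1 S2 : hypergraph K -> S1 \subset K -> S2 \subset K ->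
  connected S1 -> connected S2 -> ~~ [disjoint carrier S1 & carrier S2] ->
  carrier K \subset carrier S1 :|: carrier S2 -> connected K.
Proof.
move=> hK s1 s2 c1 c2 d12 sK; apply/connectedP => A sAK dA.
have sKU S : S \subset K -> S \subset A :|: (K :\: A).
  move=> sS; apply: subset_trans sS _; apply/subsetP => X XK.
  by rewrite !inE XK; case: (X \in A).
have hD := hypergraphS hK (subsetDl K A); have hA := hypergraphS hK sAK.
have cross U V : S1 \subset U -> S2 \subset V ->
    [disjoint carrier U & carrier V] -> False.
  by move=> sU sV dUV; move/negP: d12; apply; apply: disjointW dUV; apply: carrierS.
case: (connected_subU c1 (sKU _ s1) dA) => h1;
  case: (connected_subU c2 (sKU _ s2) dA) => h2.
- right; have : carrier (K :\: A) = set0.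
    apply: (disjoint_sub0 (V := carrier A)); first by rewrite disjoint_sym.
    apply: subset_trans (carrierS (subsetDl K A)) _; apply: subset_trans sK _.
    by rewrite subUset !carrierS.
  move/eqP; rewrite carrier_eq0 // setD_eq0 => sKA.
  by apply/eqP; rewrite eqEsubset sAK.
- by case: (cross _ _ h1 h2 dA).
- by case: (cross _ _ h1 h2); rewrite disjoint_sym.
- left; apply/eqP; rewrite -carrier_eq0 //; apply/eqP.
  apply: (disjoint_sub0 dA); apply: subset_trans (carrierS sAK) _.
  by apply: subset_trans sK _; rewrite subUset !carrierS.
Qed.

Lemma disjoint_carrier A B :
  hypergraph A -> [disjoint carrier A & carrier B] -> [disjoint A & B].
Proof.
move=> hA d; rewrite -setI_eq0; apply/eqP/setP => X; rewrite !inE.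
apply/negbTE/andP => -[XA XB]; move: d; apply/negP.
exact: not_disjoint_common (hypergraph_neq0 hA XA) (sub_carrier XA) (sub_carrier XB).
Qed.

(* By [sat_closureP] these connected sets form the saturated closure of H. *)
Definition connsets H := [set Z : {set T} |
  [&& Z != set0, connected (restrict H Z) & carrier (restrict H Z) == Z]].

Lemma connsetsP H Z :
  reflect [/\ Z != set0, connected (restrict H Z) & carrier (restrict H Z) = Z]
          (Z \in connsets H).
Proof. by rewrite inE; apply: (iffP and3P) => -[? ? /eqP]. Qed.

Lemma connsets_neq0 H Z : Z \in connsets H -> Z != set0.
Proof. by case/connsetsP. Qed.

Lemma carrier_restrict_connsets H Z : Z \in connsets H -> carrier (restrict H Z) = Z.
Proof. by case/connsetsP. Qed.

Lemma connsets_sub_carrier H Z : Z \in connsets H -> Z \subset carrier H.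
Proof. by move/carrier_restrict_connsets <-; apply/carrierS/restrict_sub. Qed.

Lemma hypergraph_connsets H : hypergraph (connsets H).
Proof. by apply/negP => /connsets_neq0; rewrite eqxx. Qed.

Lemma sub_connsets H : hypergraph H -> H \subset connsets H.
Proof.
move=> hH; apply/subsetP => X XH.
have XR : X \in restrict H X by rewrite in_restrict XH subxx.
have eC : carrier (restrict H X) = X.
  by apply/eqP; rewrite eqEsubset carrier_restrict_sub sub_carrier.
apply/connsetsP; split => //; first exact: hypergraph_neq0 XH.
by apply: connected_top XR _; [apply: hypergraphS (restrict_sub H X) | rewrite eC].
Qed.

Lemma connsets_restrict H Y :
  connsets (restrict H Y) = [set Z in connsets H | Z \subset Y].
Proof.
apply/setP => Z; rewrite [RHS]inE.
case sZY: (Z \subset Y); last first.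
  rewrite andbF; apply/negP => /connsets_sub_carrier/subset_trans.
  by move/(_ _ (carrier_restrict_sub H Y)); rewrite sZY.
by rewrite andbT !inE restrict_restrict.
Qed.

Lemma carrier_connsets H : hypergraph H -> carrier (connsets H) = carrier H.
Proof.
move=> hH; apply/eqP; rewrite eqEsubset (carrierS (sub_connsets hH)) andbT.
by apply/bigcupsP => Z /connsets_sub_carrier.
Qed.

Lemma connectedE H : hypergraph H ->
  connected H = (H == set0) || (carrier H \in connsets H).
Proof.
move=> hH; have [->|H0] /= := eqVneq H set0.
  by apply/connectedP => A; rewrite subset0 => /eqP ->; left.
by rewrite inE restrict_carrier eqxx andbT carrier_eq0 // H0.
Qed.

Lemma connected_carrier H :
  hypergraph H -> connected H -> H != set0 -> carrier H \in connsets H.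
Proof. by move=> hH; rewrite connectedE // => /orP[->|]. Qed.

Lemma connsets_eq0 H : hypergraph H -> (connsets H == set0) = (H == set0).
Proof.
move=> hH; rewrite -carrier_eq0 // -carrier_connsets // carrier_eq0 //.
exact: hypergraph_connsets.
Qed.

Lemma connsets_set0 : connsets (set0 : {set {set T}}) = set0.
Proof. by apply/eqP; rewrite connsets_eq0 // /hypergraph inE. Qed.

Lemma connected_connsets H1 H2 : hypergraph H1 -> hypergraph H2 ->
  connsets H1 = connsets H2 -> connected H1 = connected H2.
Proof.
move=> h1 h2 eC; rewrite !connectedE // -(connsets_eq0 h1) -(connsets_eq0 h2) eC.
by rewrite -(carrier_connsets h1) -(carrier_connsets h2) eC.
Qed.

Lemma connsetsU H X1 X2 : hypergraph H -> X1 \in connsets H -> X2 \in connsets H ->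
  ~~ [disjoint X1 & X2] -> X1 :|: X2 \in connsets H.
Proof.
move=> hH /connsetsP[n1 c1 e1] /connsetsP[n2 c2 e2] d.
have sub X : X \subset X1 :|: X2 -> restrict H X \subset restrict H (X1 :|: X2).
  by move=> sX; apply/subsetP => W /[!in_restrict] /andP[-> /subset_trans]; apply.
have hK := hypergraphS hH (restrict_sub H (X1 :|: X2)).
apply/connsetsP; split.
- by apply: contraNneq n1 => e; rewrite -subset0 -e subsetUl.
- apply: (connected_union hK (sub _ (subsetUl _ _)) (sub _ (subsetUr _ _))) => //.
    by rewrite e1 e2.
  by rewrite e1 e2 carrier_restrict_sub.
- apply/eqP; rewrite eqEsubset carrier_restrict_sub /=.
  by rewrite -{1}e1 -{1}e2 subUset !carrierS // sub // ?subsetUl ?subsetUr.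
Qed.

Lemma connsets_saturated H : hypergraph H -> saturated (connsets H).
Proof.
move=> hH; apply/forall_inP => X1 c1; apply/forall_inP => X2 c2.
by apply/implyP; apply: connsetsU.
Qed.

Definition components H := [set C in connsets H |
  [forall Z in connsets H, (C \subset Z) ==> (Z == C)]].

Lemma componentsP H C : reflect
  (C \in connsets H /\ forall Z, Z \in connsets H -> C \subset Z -> Z = C)
  (C \in components H).
Proof.
rewrite [C \in components H]in_set; apply: (iffP andP) => -[CC maxC]; split => //.
  by move=> Z ZC sCZ; move/forall_inP/(_ Z ZC): maxC; rewrite sCZ => /eqP.
by apply/forall_inP => Z ZC; apply/implyP => /(maxC Z ZC) ->.
Qed.

Lemma component_connsets H C : C \in components H -> C \in connsets H.
Proof. by case/componentsP. Qed.

Lemma connsets_component H Z :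
  Z \in connsets H -> exists2 C, C \in components H & Z \subset C.
Proof.
move=> ZC; pose S := [set Z' in connsets H | Z \subset Z'].
have ZS : Z \in S by rewrite [Z \in S]inE ZC subxx.
have [C CS maxC] := @arg_maxnP _ Z [in S] (fun Z' => #|Z'|) ZS.
move: CS; rewrite [C \in S]inE => /andP[CC sZC].
exists C => //; apply/componentsP; split => // Z' Z'C sCZ'.
have Z'S : Z' \in S by rewrite [Z' \in S]inE Z'C (subset_trans sZC sCZ').
by apply/eqP; rewrite eq_sym eqEcard sCZ'; apply: maxC.
Qed.

Lemma components_disjoint H C1 C2 : hypergraph H ->
  C1 \in components H -> C2 \in components H -> C1 != C2 -> [disjoint C1 & C2].
Proof.
move=> hH /componentsP[c1 m1] /componentsP[c2 m2]; apply: contraNT => d.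
have U := connsetsU hH c1 c2 d.
by rewrite -(m1 _ U (subsetUl _ _)) (m2 _ U (subsetUr _ _)).
Qed.

Lemma components_connected H : hypergraph H -> connected H -> H != set0 ->
  components H = [set carrier H].
Proof.
move=> hH cH H0; have cC := connected_carrier hH cH H0.
apply/setP => C; rewrite inE; apply/componentsP/eqP => [[CC mC]|->].
  by apply/esym/mC => //; apply: connsets_sub_carrier.
by split => // Z ZC sZ; apply/eqP; rewrite eqEsubset sZ connsets_sub_carrier.
Qed.

Lemma hpartition_block H P B : hypergraph H -> hpartition H P -> B \in P ->
  B = restrict H (carrier B).
Proof.
move=> hH hP BP; have pP : partition P H by case/andP: hP.
apply/setP => X; rewrite in_restrict; apply/idP/idP.
  by move=> XB; rewrite (subsetP (partitionS pP BP)) ?sub_carrier.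
case/andP => XH sXB; move: (XH); rewrite -(cover_partition pP).
case/bigcupP => B' B'P XB'; have [-> //|neBB'] := eqVneq B B'.
have d := hpartition_disjoint hP BP B'P neBB'.
have X0 : X = set0.
  by apply: disjoint_sub0 sXB; rewrite disjoint_sym (disjointWr (sub_carrier XB') d).
by move: (hypergraph_neq0 hH XH); rewrite X0 eqxx.
Qed.

Lemma hpartition_carrier_neq0 H P B : hypergraph H -> hpartition H P -> B \in P ->
  carrier B != set0.
Proof.
move=> hH /andP[pP _] BP; rewrite carrier_eq0; first exact: partition_neq0 pP BP.
exact: hypergraphS hH (partitionS pP BP).
Qed.

Lemma finest_components H P : hypergraph H -> finest H P ->
  [set carrier B | B in P] = components H.
Proof.
move=> hH /andP[hP /forall_inP cP]; have pP : partition P H by case/andP: hP.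
have blockC B : B \in P -> carrier B \in connsets H.
  move=> BP; rewrite inE -(hpartition_block hH hP BP) cP // eqxx !andbT.
  exact: hpartition_carrier_neq0 hH hP BP.
have sUD B' S : S \subset H -> S \subset B' :|: (H :\: B').
  by move=> sSH; apply/subsetP => X XS; rewrite !inE (subsetP sSH X XS) andbT orbN.
apply/setP => C; apply/imsetP/componentsP => [[B BP ->]|[CC mC]].
  split=> [|Z /connsetsP[_ cZ eZ] sBZ]; first exact: blockC.
  have := connected_subU cZ (sUD B _ (restrict_sub H Z)) (hpartition_split hP BP).
  case=> [sRB|sRD].
    by apply/eqP; rewrite eqEsubset sBZ andbT -{1}eZ carrierS.
  suff /eqP : carrier B = set0 by rewrite (negbTE (hpartition_carrier_neq0 hH hP BP)).
  apply: (disjoint_sub0 (hpartition_split hP BP)).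
  by apply: subset_trans sBZ _; rewrite -eZ carrierS.
case/connsetsP: (CC) => C0 cR eR.
have hR := hypergraphS hH (restrict_sub H C).
have /set0Pn[X XR] : restrict H C != set0 by rewrite -carrier_eq0 // eR.
have XH : X \in H by move: XR; rewrite in_restrict => /andP[].
move: (XH); rewrite -(cover_partition pP) => /bigcupP[B BP XB].
have := connected_subU cR (sUD B _ (restrict_sub H C)) (hpartition_split hP BP).
case=> [sRB|sRD].
  by exists B => //; apply/esym/mC; [apply: blockC | rewrite -eR carrierS].
by move: (subsetP sRD X XR); rewrite inE XB.
Qed.

Definition comp_partition H := [set restrict H C | C in components H].

Lemma finest_comp_partition H : hypergraph H -> finest H (comp_partition H).
Proof.
move=> hH.
have cc C : C \in components H -> carrier (restrict H C) = C.
  by move/component_connsets/carrier_restrict_connsets.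
have bdisj C1 C2 : C1 \in components H -> C2 \in components H ->
    restrict H C1 != restrict H C2 ->
    [disjoint carrier (restrict H C1) & carrier (restrict H C2)].
  move=> c1 c2 ne; rewrite !cc //; apply: (components_disjoint hH c1 c2).
  by apply: contraNneq ne => ->.
apply/andP; split; [apply/andP; split|].
- apply/and3P; split.
  + apply/eqP/setP => X; apply/bigcupP/idP => [[B /imsetP[C CC ->]]|XH].
      by rewrite in_restrict => /andP[].
    have [C CC sXC] := connsets_component (subsetP (sub_connsets hH) X XH).
    by exists (restrict H C); [apply: imset_f | rewrite in_restrict XH].
  + apply/trivIsetP => _ _ /imsetP[C1 c1 ->] /imsetP[C2 c2 ->] ne.
    apply: disjoint_carrier (bdisj _ _ c1 c2 ne).
    exact: hypergraphS hH (restrict_sub H C1).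
  + apply/imsetP => -[C CC e].
    have := connsets_neq0 (component_connsets CC).
    by rewrite -(cc C CC) -e carrier_set0 eqxx.
- apply/forall_inP => _ /imsetP[C1 c1 ->]; apply/forall_inP => _ /imsetP[C2 c2 ->].
  by apply/implyP; apply: bdisj.
- by apply/forall_inP => _ /imsetP[C /component_connsets /connsetsP[]] _ ? _ ->.
Qed.

Lemma finestE H P : hypergraph H -> finest H P -> P = comp_partition H.
Proof.
move=> hH fP; have hP : hpartition H P by case/andP: fP.
rewrite /comp_partition -(finest_components hH fP) -imset_comp.
by rewrite (eq_in_imset (g := id)) ?imset_id // => B /(hpartition_block hH hP).
Qed.

Lemma card_comp_partition H : #|comp_partition H| = #|components H|.
Proof.
apply: card_in_imset => C1 C2 /component_connsets c1 /component_connsets c2 e.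
by rewrite -(carrier_restrict_connsets c1) e carrier_restrict_connsets.
Qed.

Lemma conn_numberE H : hypergraph H -> conn_number H = #|components H|.
Proof.
move=> hH; rewrite /conn_number; case: pickP => [P fP|none].
  by rewrite (finestE hH fP) card_comp_partition.
by have := none (comp_partition H); rewrite finest_comp_partition.
Qed.

Lemma finest_card_gt1 H P : hypergraph H -> H != set0 -> ~~ connected H ->
  finest H P -> 1 < #|P|.
Proof.
move=> hH H0 cH /andP[hP cP]; have pP : partition P H by case/andP: hP.
have : P != set0.
  by apply: contraNneq H0 => P0; rewrite -(cover_partition pP) P0 /cover big_set0.
rewrite -card_gt0 leq_eqVlt => /orP[/eqP/esym/eqP/cards1P[B eP]|//].
have eB : B = H by rewrite -(cover_partition pP) eP cover1.
by move/forall_inP: cP => /(_ B); rewrite eP set11 eB (negbTE cH) => /(_ isT).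
Qed.

Lemma hpartition_carrier_proper H P B : hypergraph H -> hpartition H P ->
  1 < #|P| -> B \in P -> carrier B \proper carrier H.
Proof.
move=> hH hP ltP BP; have pP : partition P H by case/andP: hP.
rewrite properE carrierS ?(partitionS pP BP) //=.
have : #|P :\ B| != 0 by move: ltP; rewrite (cardsD1 B P) BP add1n ltnS lt0n.
rewrite cards_eq0 => /set0Pn[B' /setD1P[neB'B B'P]]; apply/negP => sHB.
have /eqP := disjoint_sub0 (hpartition_disjoint hP B'P BP neB'B)
  (subset_trans (carrierS (partitionS pP B'P)) sHB).
by rewrite (negbTE (hpartition_carrier_neq0 hH hP B'P)).
Qed.

Lemma connected_add R Y D : hypergraph R -> Y != set0 -> D \subset R ->
  connected D -> carrier D = Y -> connected (Y |: R) = connected R.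
Proof.
move=> hR Y0 sDR cD eD.
have sYR : Y \subset carrier R by rewrite -eD carrierS.
have hYR : hypergraph (Y |: R) by rewrite /hypergraph !inE negb_or eq_sym Y0.
apply/idP/idP => [cYR|cR]; last first.
  apply: (connected_union hYR (subsetUr _ _) (_ : [set Y] \subset _) cR).
  - by rewrite sub1set setU11.
  - apply: (@connected_top _ Y); rewrite ?carrier_set1 ?inE //.
    by rewrite /hypergraph inE eq_sym.
  - by rewrite carrier_set1; apply: (not_disjoint_common Y0).
  - by rewrite carrierU1 carrier_set1 setUC.
apply/connectedP => A sAR dA.
wlog sDA : A sAR dA / D \subset A.
  move=> wlogA; have sD : D \subset A :|: (R :\: A).
    by apply: subset_trans sDR _; rewrite -{1}(setID R A) (setIidPr sAR).
  case: (connected_subU cD sD dA) => [|sDD]; first exact: wlogA.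
  have eA : R :\: (R :\: A) = A by rewrite setDDr setDv set0U (setIidPr sAR).
  have := wlogA _ (subsetDl R A); rewrite eA disjoint_sym => /(_ dA sDD).
  case=> [/eqP|eRA].
    by rewrite setD_eq0 => sRA; right; apply/eqP; rewrite eqEsubset sAR.
  left; apply/setP => X; rewrite inE; apply/negbTE/negP => XA.
  by move: (subsetP sAR X XA); rewrite -eRA inE XA.
have sYA : Y \subset carrier A by rewrite -eD carrierS.
have nY : Y \notin R :\: A.
  by apply: contraTN dA => /sub_carrier; apply: not_disjoint_common Y0 sYA.
have dU : [disjoint carrier (Y |: A) & carrier (R :\: A)].
  by rewrite carrierU1 (setUidPr sYA).
have sU : Y |: R \subset (Y |: A) :|: (R :\: A).
  by rewrite -setUA -{1}(setID R A) (setIidPr sAR).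
case: (connected_subU cYR sU dU) => [s1|s2]; last first.
  by move: (subsetP s2 Y (setU11 _ _)); rewrite (negbTE nY).
right; apply/eqP; rewrite eqEsubset sAR /=; apply/subsetP => X XR.
move: (subsetP s1 X (setU1r _ XR)); rewrite !inE => /orP[/eqP XY|//].
by apply/negPn/negP => XA; move: nY; rewrite -XY inE XA XR.
Qed.

Lemma cog_step_connsets H G :
  hypergraph H -> cog_step H G -> connsets G = connsets H.
Proof.
move=> hH [Y [/and3P[sY cD /eqP eD] Y0 ->]].
apply/setP => Z; rewrite !inE; case sYZ: (Y \subset Z); last first.
  have -> // : restrict (Y |: H) Z = restrict H Z.
  apply/setP => X; rewrite !in_restrict !inE.
  by case: (eqVneq X Y) => [->|] //=; rewrite sYZ andbF.
have -> : restrict (Y |: H) Z = Y |: restrict H Z.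
  apply/setP => X; rewrite in_restrict !inE.
  by case: (eqVneq X Y) => [->|] //=; rewrite sYZ.
have sDR : restrict H Y :\ Y \subset restrict H Z.
  apply/subsetP => X; rewrite !inE => /andP[_ /andP[XH sXY]].
  by rewrite XH (subset_trans sXY sYZ).
have hR := hypergraphS hH (restrict_sub H Z).
have sYc : Y \subset carrier (restrict H Z) by rewrite -eD carrierS.
by rewrite (connected_add hR Y0 sDR cD eD) carrierU1 (setUidPr sYc).
Qed.

Lemma cognate_connsets H G : cognate H G ->
  hypergraph G = hypergraph H /\ (hypergraph H -> connsets G = connsets H).
Proof.
elim=> {H G} [H G st|H|H G _ [e1 e2]|H G K _ [e1 e2] _ [e3 e4]].
- split=> [|hH]; last exact: cog_step_connsets.
  by case: st => Y [_ Y0 ->]; rewrite /hypergraph !inE negb_or eq_sym Y0.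
- by [].
- by split => // hG; rewrite e2 // -e1.
- by split; [rewrite e3 e1 | move=> hH; rewrite e4 ?e1 // e2].
Qed.

(* The largest edge X inside a connected set Y of a saturated G absorbs every
   edge of G_Y meeting it, so G_Y splits unless X = Y. *)
Lemma saturated_connsets G : hypergraph G -> saturated G -> connsets G = G.
Proof.
move=> hG sG; apply/eqP; rewrite eqEsubset sub_connsets // andbT.
apply/subsetP => Y /connsetsP[Y0 /connectedP cR eR].
set R := restrict G Y in cR eR.
have hR : hypergraph R := hypergraphS hG (restrict_sub G Y).
have /set0Pn[X0 X0R] : R != set0 by rewrite -carrier_eq0 // eR.
have [X XR maxX] := @arg_maxnP _ X0 [in R] (fun X => #|X|) X0R.
have /andP[XG sXY] : (X \in G) && (X \subset Y) by rewrite -in_restrict.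
suff dX : [disjoint carrier (restrict R X) & carrier (R :\: restrict R X)].
  case: (cR _ (restrict_sub R X) dX) => e.
    have : X \in restrict R X by rewrite in_restrict XR subxx.
    by rewrite e inE.
  suff -> : Y = X by [].
  by apply/eqP; rewrite eqEsubset sXY -eR -e carrier_restrict_sub.
rewrite -setI_eq0; apply/set0Pn => -[x /setIP[/carrierP[W WA xW]]].
case/carrierP => Z /setDP[ZR ZnA] xZ.
have sWX : W \subset X by move: WA; rewrite in_restrict => /andP[].
have /andP[ZG sZY] : (Z \in G) && (Z \subset Y) by rewrite -in_restrict.
have nZX : ~~ (Z \subset X) by move: ZnA; rewrite in_restrict ZR.
have UG : X :|: Z \in G.
  move/forall_inP/(_ X XG)/forall_inP/(_ Z ZG)/implyP: sG; apply.
  apply: (not_disjoint_common (W := [set x])); rewrite ?sub1set ?(subsetP sWX) //.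
  by apply/set0Pn; exists x; rewrite inE.
have UR : X :|: Z \in R by rewrite in_restrict UG subUset sXY.
have /eqP eX : X == X :|: Z by rewrite eqEcard subsetUl; apply: maxX.
by move: nZX; rewrite eX subsetUr.
Qed.

Lemma cognate_connsetsU H S : hypergraph H -> S \subset connsets H ->
  cognate H (H :|: S).
Proof.
move=> hH; elim: {S}_.+1 {-2}S (ltnSn #|S|) => // n IH S ltSn sS.
have [->|[Y YS]] := set_0Vmem S; first by rewrite setU0; apply: rst_refl.
have sS' : S :\ Y \subset connsets H by apply: subset_trans sS; apply: subsetDl.
have cg : cognate H (H :|: S :\ Y).
  by apply: IH sS'; move: ltSn; rewrite (cardsD1 Y) YS.
set G := H :|: S :\ Y in cg.
have YC : Y \in connsets G by rewrite (proj2 (cognate_connsets cg)) // (subsetP sS).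
have -> : H :|: S = Y |: G by rewrite /G setUCA setD1K.
have [YG|YG] := boolP (Y \in G); first by rewrite (setUidPr _) // sub1set.
apply: rst_trans cg _; apply: rst_step; exists Y.
split=> //; last exact: connsets_neq0 YC.
case/connsetsP: YC => _ cR eR; rewrite /dispensable.
have -> : restrict G Y :\ Y = restrict G Y.
  by apply/setDidPl; rewrite disjoint_sym disjoints1 in_restrict (negbTE YG).
by apply/and3P; split; rewrite ?eR // -eR carrierS // restrict_sub.
Qed.

Lemma sat_closureP H G : hypergraph H -> sat_closure H G <-> G = connsets H.
Proof.
move=> hH; split=> [[sG cg]|->].
  have [hG eC] := cognate_connsets cg.
  by rewrite -eC // saturated_connsets // hG.
split; first exact: connsets_saturated.
by have := cognate_connsetsU hH (subxx _); rewrite (setUidPr (sub_connsets hH)).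
Qed.

Lemma atomic_restrict H Y : atomic H -> atomic (restrict H Y).
Proof.
move=> aH x /carrierP[X XR xX]; move: XR; rewrite !in_restrict => /andP[XH sXY].
by rewrite aH ?sub1set ?(subsetP sXY) //; apply/carrierP; exists X.
Qed.

Lemma construction_sub_connsets H K :
  construction H K -> hypergraph H -> K \subset connsets H.
Proof.
elim=> {H K} [|H x K cH xH _ IH|H P f ncH fP _ _ IH] hH; first exact: sub0set.
  rewrite subUset sub1set connected_carrier //=; last first.
    by apply/set0Pn; case/carrierP: xH => X XH _; exists X.
  apply: subset_trans (IH (hypergraphS hH (restrict_sub _ _))) _.
  by rewrite connsets_restrict; apply/subsetP => Z /[!inE] /andP[].
have hP : hpartition H P by case/andP: fP.
have pP : partition P H by case/andP: hP.
apply/bigcupsP => B BP; apply: subset_trans (IH B BP _) _.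
  exact: hypergraphS hH (partitionS pP BP).
rewrite (hpartition_block hH hP BP) connsets_restrict.
by apply/subsetP => Z /[!inE] /andP[].
Qed.

Lemma components_sub_construction H K :
  construction H K -> hypergraph H -> components H \subset K.
Proof.
elim=> {H K} [|H x K cH xH _ IH|H P f ncH fP _ _ IH] hH.
- by apply/subsetP => C /component_connsets; rewrite connsets_set0 inE.
- rewrite components_connected // ?sub1set ?setU11 //.
  by apply/set0Pn; case/carrierP: xH => X XH _; exists X.
have hP : hpartition H P by case/andP: fP.
have pP : partition P H by case/andP: hP.
apply/subsetP => C; rewrite -(finest_components hH fP) => /imsetP[B BP ->].
have hB := hypergraphS hH (partitionS pP BP).
have cB : connected B by case/andP: fP => _ /forall_inP; apply.
apply/bigcupP; exists B => //; apply: (subsetP (IH B BP hB)).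
by rewrite components_connected // ?set11 // (partition_neq0 pP BP).
Qed.

Lemma card_construction H K :
  construction H K -> hypergraph H -> atomic H -> #|K| = #|carrier H|.
Proof.
elim=> {H K} [|H x K cH xH cK IH|H P f ncH fP lt cf IH] hH aH.
- by rewrite carrier_set0 !cards0.
- set Y := carrier H :\ x in cK IH *.
  have hR := hypergraphS hH (restrict_sub H Y).
  have eR : carrier (restrict H Y) = Y.
    apply/eqP; rewrite eqEsubset carrier_restrict_sub; apply/subsetP => y yY.
    have yH : y \in carrier H by move: yY; rewrite inE => /andP[].
    by apply/carrierP; exists [set y]; rewrite ?inE // aH // sub1set.
  have nK : carrier H \notin K.
    apply/negP => /(subsetP (construction_sub_connsets cK hR)) /connsets_sub_carrier.
    by rewrite eR => /subsetP/(_ x xH); rewrite !inE eqxx.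
  by rewrite cardsU1 nK (IH hR (atomic_restrict aH)) eR (cardsD1 x (carrier H)) xH.
have hP : hpartition H P by case/andP: fP.
have pP : partition P H by case/andP: hP.
have hB B : B \in P -> hypergraph B by move/(partitionS pP)/(hypergraphS hH).
have cardB B : B \in P -> #|f B| = #|carrier B|.
  move=> BP; apply: IH (hB B BP) _ => //.
  by rewrite (hpartition_block hH hP BP); apply: atomic_restrict.
have cB0 := hpartition_carrier_neq0 hH hP.
rewrite card_bigcup_disjoint; last first.
- by move=> B BP; rewrite -card_gt0 cardB // card_gt0 cB0.
- move=> B1 B2 b1 b2 ne; have d := hpartition_disjoint hP b1 b2 ne.
  have s1 := construction_sub_connsets (cf _ b1) (hB _ b1).
  have s2 := construction_sub_connsets (cf _ b2) (hB _ b2).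
  rewrite -setI_eq0; apply/set0Pn => -[Z /setIP[/(subsetP s1) Z1 /(subsetP s2) Z2]].
  move: d; apply/negP.
  apply: not_disjoint_common (connsets_neq0 Z1) (connsets_sub_carrier Z1) _.
  exact: connsets_sub_carrier Z2.
rewrite (eq_bigr _ cardB) -card_bigcup_disjoint //.
- by rewrite {2}/carrier (set_partition_big _ pP).
- by move=> B1 B2; apply: hpartition_disjoint hP.
Qed.

Lemma bigcup_comp_partition H (f : {set {set T}} -> {set {set T}}) :
  \bigcup_(B in comp_partition H) f B = \bigcup_(C in components H) f (restrict H C).
Proof. by rewrite big_imset_idem //; apply: setUid. Qed.

Lemma construction_connsets H1 H2 K : hypergraph H1 -> hypergraph H2 ->
  connsets H1 = connsets H2 -> construction H1 K -> construction H2 K.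
Proof.
move=> + + + cK; elim: cK H2 => {H1 K} [|H x K cH xH _ IH|H P f ncH fP ltP _ IH]
  H2 h1 h2 eC.
- have /eqP -> : H2 == set0 by rewrite -connsets_eq0 // -eC connsets_set0.
  exact: construction0.
- have ec : carrier H = carrier H2.
    by rewrite -(carrier_connsets h1) eC carrier_connsets.
  rewrite ec; apply: (construction1 (x := x)); rewrite -?ec //.
    by rewrite -(connected_connsets h1 h2 eC).
  apply: IH; rewrite ?connsets_restrict ?eC //; exact: hypergraphS (restrict_sub _ _).
have eP := finestE h1 fP.
have eComp : components H = components H2 by rewrite /components eC.
have fP2 := finest_comp_partition h2.
rewrite eP bigcup_comp_partition eComp.
rewrite (eq_bigr (fun C => f (restrict H (carrier (restrict H2 C))))); last first.
  by move=> C /component_connsets CC; rewrite carrier_restrict_connsets // -eC.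
rewrite -(bigcup_comp_partition H2 (fun B => f (restrict H (carrier B)))).
apply: construction2 fP2 _ _.
- by rewrite -(connected_connsets h1 h2 eC).
- by rewrite card_comp_partition -eComp -card_comp_partition -eP.
move=> _ /imsetP[C CC ->]; rewrite carrier_restrict_connsets ?component_connsets //.
have CC1 : C \in components H by rewrite eComp.
apply: IH; rewrite ?eP ?imset_f // ?connsets_restrict ?eC //;
  exact: hypergraphS (restrict_sub _ _).
Qed.

Lemma exists_point_outside H W : hypergraph H -> H != set0 ->
  W \subset connsets H -> #|W| <= 1 ->
  exists2 x, x \in carrier H & forall Y, Y \in W :\ carrier H -> x \notin Y.
Proof.
move=> hH H0 sW W1; have [W'0|[Y YW']] := set_0Vmem (W :\ carrier H).
  have /set0Pn[x xH] : carrier H != set0 by rewrite carrier_eq0.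
  by exists x => // Y; rewrite W'0 inE.
have /setD1P[neYH YW] := YW'.
have /subsetPn[x xH xY] : ~~ (carrier H \subset Y).
  by apply: contra neYH => sHY; rewrite eqEsubset connsets_sub_carrier ?(subsetP sW).
exists x => // Y' /setD1P[_ Y'W].
by have -> : Y' = Y by apply: (card_le1_eqP W1).
Qed.

(* The target is a set W of at most one element rather than a single Y, so
   that the induction may recurse into parts of H that do not contain Y. *)
Lemma construction_through H W : hypergraph H -> W \subset connsets H ->
  #|W| <= 1 -> exists2 K, construction H K & W \subset K.
Proof.
elim: {H}_.+1 {-2}H (ltnSn #|carrier H|) W => // n IH H ltHn W hH sW W1.
have [H0|H0] := eqVneq H set0.
  move: sW; rewrite H0 connsets_set0 subset0 => /eqP ->.
  by exists set0 => //; apply: construction0.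
have [cH|ncH] := boolP (connected H).
  set W' := W :\ carrier H.
  have [x xH xW'] := exists_point_outside hH H0 sW W1.
  set R := restrict H (carrier H :\ x).
  have ltRn : #|carrier R| < n.
    move: ltHn; rewrite (cardsD1 x (carrier H)) xH add1n ltnS.
    exact/leq_ltn_trans/subset_leq_card/carrier_restrict_sub.
  have sW'R : W' \subset connsets R.
    apply/subsetP => Y YW'; have /setD1P[_ /(subsetP sW) YC] := YW'.
    by rewrite connsets_restrict inE YC subsetD1 connsets_sub_carrier ?xW'.
  have [K cK sWK] := IH R ltRn W' (hypergraphS hH (restrict_sub _ _)) sW'R
    (leq_trans (subset_leq_card (subsetDl W _)) W1).
  exists (carrier H |: K); first exact: construction1 cK.
  apply/subsetP => Y YW; have [->|neYH] := eqVneq Y (carrier H); first exact: setU11.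
  by apply/setU1r/(subsetP sWK)/setD1P.
set P := comp_partition H.
have fP : finest H P := finest_comp_partition hH.
have hP : hpartition H P by case/andP: fP.
have pP : partition P H by case/andP: hP.
have ltP := finest_card_gt1 hH H0 ncH fP.
have /fin_all_exists[f hf] B : exists K,
    B \in P -> construction B K /\ restrict W (carrier B) \subset K.
  have [BP|_] := boolP (B \in P); last by exists set0.
  have ltBn : #|carrier B| < n.
    rewrite -ltnS (leq_trans _ ltHn) // ltnS.
    exact/proper_card/(hpartition_carrier_proper hH hP ltP BP).
  have sWB : restrict W (carrier B) \subset connsets B.
    apply/subsetP => Y /[!in_restrict] /andP[/(subsetP sW) YC sY].
    by rewrite (hpartition_block hH hP BP) connsets_restrict inE YC.
  have [K cK sWK] := IH B ltBn _ (hypergraphS hH (partitionS pP BP)) sWB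
    (leq_trans (subset_leq_card (restrict_sub W _)) W1).
  by exists K.
exists (\bigcup_(B in P) f B).
  by apply: construction2 ncH fP ltP _ => B BP; case: (hf B BP).
apply/subsetP => Y YW; have [C CC sYC] := connsets_component (subsetP sW Y YW).
have BP : restrict H C \in P by apply: imset_f.
apply/bigcupP; exists (restrict H C) => //; apply: (subsetP (proj2 (hf _ BP))).
by rewrite in_restrict YW carrier_restrict_connsets ?component_connsets.
Qed.

End ConnectedSets.

Section Constructs.
Variable T : finType.
Implicit Types (H G A B C D K R S U V W : {set {set T}}) (X Y Z : {set T}).

Lemma constructE H C : hypergraph H -> construct H C <->
  (exists K, construction H K /\ C \subset K) /\ components H \subset C.
Proof.
move=> hH; split=> -[exK hc]; split=> //.
  apply/subsetP => Z ZC.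
  have := hc _ (finest_comp_partition hH) _ (imset_f _ ZC).
  by rewrite carrier_restrict_connsets ?component_connsets.
move=> P fP B BP; apply: (subsetP hc).
by rewrite -(finest_components hH fP); apply: imset_f.
Qed.

Lemma construct_sub_connsets H C :
  hypergraph H -> construct H C -> C \subset connsets H.
Proof.
move=> hH [[K [cK sCK]] _].
exact: subset_trans sCK (construction_sub_connsets cK hH).
Qed.

Lemma construct_connsets H1 H2 C : hypergraph H1 -> hypergraph H2 ->
  connsets H1 = connsets H2 -> construct H1 C -> construct H2 C.
Proof.
move=> h1 h2 eC /(constructE _ h1)[[K [cK sCK]] sComp]; apply/(constructE _ h2).
split; first by exists K; split=> //; apply: construction_connsets cK.
by rewrite /components -eC.
Qed.

Lemma construct_through H Y m : hypergraph H -> atomic H -> Y \in connsets H ->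
  #|components H| < m <= #|carrier H| ->
  exists C, [/\ construct H C, Y \in C & #|C| = m].
Proof.
move=> hH aH YC /andP[ltm lem].
have [K cK] : exists2 K, construction H K & [set Y] \subset K.
  by apply: construction_through; rewrite ?sub1set ?cards1.
rewrite sub1set => YK.
have sAK : Y |: components H \subset K.
  by rewrite subUset sub1set YK components_sub_construction.
have [|C [sAC sCK cardC]] := exists_card_between sAK (m := m).
  rewrite (card_construction cK hH aH) lem andbT.
  by apply: leq_trans ltm; rewrite cardsU1 -add1n leq_add2r leq_b1.
exists C; split=> //; last exact: (subsetP sAC) (setU11 _ _).
apply/constructE => //; split; first by exists K.
exact: subset_trans (subsetUr _ _) sAC.
Qed.

Lemma inA_connsets H1 H2 F : hypergraph H1 -> hypergraph H2 ->
  connsets H1 = connsets H2 -> inA H1 F -> inA H2 F.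
Proof.
move=> h1 h2 eC [[C [cC ->]]|[G [/(sat_closureP _ h1) -> ->]]].
  by left; exists C; split => //; apply: construct_connsets cC.
by right; exists (connsets H2); split; [apply/sat_closureP | rewrite eC].
Qed.

Lemma enc_inj : injective (@enc T).
Proof. by apply: imset_inj => x y [->]. Qed.

Lemma enc_None_inj A B : None |: enc A = None |: enc B -> A = B.
Proof.
move=> e; apply/setP => X.
have : (Some X \in None |: enc A) = (Some X \in None |: enc B) by rewrite e.
by rewrite !inE /enc !(mem_imset _ _ (@Some_inj _)).
Qed.

Lemma face_of_rankN1 H F : hypergraph H ->
  face_of_rank H (-1)%R F <-> F = None |: enc (connsets H).
Proof.
move=> hH; split=> [[[_ [G [/(sat_closureP _ hH) -> ->]]]|[]]//|->].
by left; split => //; exists (connsets H); split => //; apply/sat_closureP.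
Qed.

Lemma connsets_sub_faces H1 H2 (k : nat) : hypergraph H1 -> hypergraph H2 ->
  atomic H1 -> (k%:Z <= rankA H1 - 1)%R ->
  (forall F, face_of_rank H1 k%:Z F -> face_of_rank H2 k%:Z F) ->
  connsets H1 \subset connsets H2.
Proof.
move=> h1 h2 a1 kr hF; apply/subsetP => Y YC.
have le : (k + #|components H1| + 1 <= #|carrier H1|)%N.
  by move: kr; rewrite /rankA conn_numberE // lerBrDr lerBrDr -!PoszD lez_nat addnAC.
have [|C [cC YinC cardC]] := construct_through h1 a1 YC (m := #|carrier H1| - k).
  by rewrite leq_subr andbT ltn_subRL; move: le; rewrite addn1.
have /hF[[/eqP//]|[_ _ [C' [cC' _ /enc_inj eC]]]] : face_of_rank H1 k%:Z (enc C).
  right; split=> //; first by apply: le_trans kr _; rewrite gerBl.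
  exists C; split=> //; rewrite cardC subzn //.
  by apply: leq_trans le; rewrite -addnA leq_addr.
by rewrite -eC in cC'; apply: (subsetP (construct_sub_connsets h2 cC')).
Qed.

End Constructs.

Theorem proposition5p3 (T : finType) (H1 H2 : {set {set T}}) (k : int) :
  hypergraph H1 -> hypergraph H2 -> atomic H1 -> atomic H2 ->
  (-1 <= k)%R -> (k <= Num.min (rankA H1) (rankA H2) - 1)%R ->
  (forall F, face_of_rank H1 k F <-> face_of_rank H2 k F) ->
  forall F, inA H1 F <-> inA H2 F.
Proof.
move=> h1 h2 a1 a2 km kM hF.
suff eC : connsets H1 = connsets H2.
  by move=> F; split; apply: inA_connsets.
move: kM; rewrite lerBrDr le_min -!lerBrDr => /andP[k1 k2].
case: k km k1 k2 hF => [n _|n km] k1 k2 hF.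
  have s12 := connsets_sub_faces h1 h2 a1 k1 (fun F => (hF F).1).
  have s21 := connsets_sub_faces h2 h1 a2 k2 (fun F => (hF F).2).
  by apply/eqP; rewrite eqEsubset s12 s21.
have n0 : n = 0 by move: km; rewrite NegzE lerN2 lez_nat ltnS leqn0 => /eqP.
rewrite {}n0 in hF *.
have /hF : face_of_rank H1 (-1)%R (None |: enc (connsets H1)).
  exact/face_of_rankN1.
by move/(face_of_rankN1 _ h2)/enc_None_inj.
Qed.
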